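(* Let $(J,\mathcal F)$, $b^S,w^S_j$, $P(\mathcal F)$ be as in the context with $P(\mathcal F)$ an $\mathcal F$-extended polymatroid, and let $\mathbf c$ be $\mathcal F$-admissible, with $\mathrm{AG}_2$ on input $\mathbf c$ producing $\boldsymbol\pi,\boldsymbol\nu$ and $S_k=\{\pi_k,\dots,\pi_n\}$. Define $c^{S_1}_j=c_j$ ($j\in J$) and $c^{S_k}_j=c^{S_{k-1}}_j-\frac{c^{S_{k-1}}_{\pi_{k-1}}}{w^{S_{k-1}}_{\pi_{k-1}}}[w^{S_{k-1}}_j-w^{S_k}_j]$ for $j\in S_k$, $2\le k\le n$, and let $v^{\mathrm{LP}}=\min\{\sum_jc_jx_j:\mathbf x\in P(\mathcal F)\}$. Then for $1\le m\le n-1$, $$v^{\mathrm{LP}}=\sum_{k=1}^m\nu_{\pi_k}\,[b^{S_k}-b^{S_{k+1}}]+\sum_{j\in S_{m+1}}c^{S_{m+1}}_j\,x^{\boldsymbol\pi}_j.$$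
   Context: $J$ finite, $|J|=n$; $\mathcal F\subseteq2^J$ with $\emptyset\in\mathcal F$, each nonempty $S\in\mathcal F$ having nonempty $\partial^-S=\{j\in S:S\setminus\{j\}\in\mathcal F\}$, each $S\in\mathcal F\ne J$ having $j\notin S$ with $S\cup\{j\}\in\mathcal F$. Full $\mathcal F$-string: ordering $\boldsymbol\pi$ of $J$ with $\{\pi_k,\dots,\pi_n\}\in\mathcal F$ for all $k$. Given $b^S\ge0$, $w^S_j>0$: $P(\mathcal F)=\{\mathbf x\ge0:\sum_{j\in S}w^S_jx_j\ge b^S\ (S\in\mathcal F\setminus\{J\}),\ \sum_{j\in J}w^J_jx_j=b^J\}$; $\mathbf x^{\boldsymbol\pi}$ is the unique solution of $\sum_{l=k}^nw^{S_k}_{\pi_l}x_{\pi_l}=b^{S_k}$ ($1\le k\le n$); $P(\mathcal F)$ is an $\mathcal F$-extended polymatroid if $\mathbf x^{\boldsymbol\pi}\in P(\mathcal F)$ for every full $\mathcal F$-string. $\mathrm{AG}_2$ on input $\mathbf c$: $S_1=J$, $\nu^{S_1}_j=c_j/w^{S_1}_j$, $\pi_1\in\arg\min\{\nu^{S_1}_j:j\in\partial^-S_1\}$, $\nu_{\pi_1}=\nu^{S_1}_{\pi_1}$; for $k=2..n$: $S_k=S_{k-1}\setminus\{\pi_{k-1}\}$, $\nu^{S_k}_j=\nu^{S_{k-1}}_j+(w^{S_{k-1}}_j/w^{S_k}_j-1)[\nu^{S_{k-1}}_j-\nu^{S_{k-1}}_{\pi_{k-1}}]$ ($j\in S_k$),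 $\pi_k\in\arg\min\{\nu^{S_k}_j:j\in\partial^-S_k\}$, $\nu_{\pi_k}=\nu^{S_k}_{\pi_k}$. $\mathbf c$ is $\mathcal F$-admissible if $\nu_{\pi_1}\le\cdots\le\nu_{\pi_n}$. *)

From mathcomp Require Import all_boot all_order all_algebra.
Set Implicit Arguments. Unset Strict Implicit. Unset Printing Implicit Defensive.
Import Order.TTheory GRing.Theory Num.Theory.
Local Open Scope ring_scope.

Section Defs.
Variables (R : realFieldType) (J : finType).

Definition boundary (F : {set {set J}}) (S : {set J}) : {set J} :=
  [set j in S | S :\ j \in F].

(* An ordering of J is given as pi : nat -> J, using indices 0 .. n-1
   (paper index k corresponds to k-1 here).
   suffS pi k = { pi_k, ..., pi_{n-1} }  (0-indexed), i.e. paper's S_{k+1}. *)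
Definition suffS (pi : nat -> J) (k : nat) : {set J} :=
  [set x in [seq pi i | i <- iota k (#|J| - k)]].

Definition is_ordering (pi : nat -> J) : Prop :=
  perm_eq [seq pi i | i <- iota 0 #|J|] (enum J).

Definition full_string (F : {set {set J}}) (pi : nat -> J) : Prop :=
  is_ordering pi /\ forall k, (k < #|J|)%N -> suffS pi k \in F.

(* x solves  sum_{l >= k} w^{S_k}_{pi_l} x_{pi_l} = b^{S_k}  for all k;
   for w > 0 this system has a unique solution, namely x^pi. *)
Definition solves_string (w : {set J} -> J -> R) (b : {set J} -> R)
  (pi : nat -> J) (x : J -> R) : Prop :=
  forall k, (k < #|J|)%N ->
    \sum_(j in suffS pi k) w (suffS pi k) j * x j = b (suffS pi k).

Definition inP (F : {set {set J}}) (w : {set J} -> J -> R) (b : {set J} -> R)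
  (x : J -> R) : Prop :=
  [/\ forall j, 0 <= x j,
      forall S, S \in F -> S != [set: J] -> b S <= \sum_(j in S) w S j * x j
    & \sum_(j : J) w [set: J] j * x j = b [set: J]].

Definition ext_polymatroid (F : {set {set J}}) (w : {set J} -> J -> R)
  (b : {set J} -> R) : Prop :=
  forall pi x, full_string F pi -> solves_string w b pi x -> inP F w b x.

Fixpoint nuS (w : {set J} -> J -> R) (c : J -> R) (pi : nat -> J)
  (k : nat) (j : J) : R :=
  match k with
  | 0 => c j / w [set: J] j
  | k'.+1 => nuS w c pi k' j
      + (w (suffS pi k') j / w (suffS pi k) j - 1)
        * (nuS w c pi k' j - nuS w c pi k' (pi k'))
  end.

Definition AG2_run (F : {set {set J}}) (w : {set J} -> J -> R) (c : J -> R)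
  (pi : nat -> J) : Prop :=
  is_ordering pi /\
  forall k, (k < #|J|)%N ->
    pi k \in boundary F (suffS pi k) /\
    forall j, j \in boundary F (suffS pi k) -> nuS w c pi k (pi k) <= nuS w c pi k j.

Definition admissible (w : {set J} -> J -> R) (c : J -> R) (pi : nat -> J) : Prop :=
  forall k, (k.+1 < #|J|)%N -> nuS w c pi k (pi k) <= nuS w c pi k.+1 (pi k.+1).

Fixpoint cS (w : {set J} -> J -> R) (c : J -> R) (pi : nat -> J)
  (k : nat) (j : J) : R :=
  match k with
  | 0 => c j
  | k'.+1 => cS w c pi k' j
      - cS w c pi k' (pi k') / w (suffS pi k') (pi k')
        * (w (suffS pi k') j - w (suffS pi k) j)
  end.

End Defs.

(** Along the run of AG_2, the reduced costs satisfy c^{S_k}_j = w^{S_k}_j nu^{S_k}_j, so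
    for every x the cost telescopes: c x = sum_k nu_{pi_k} (g_k(x) - g_{k+1}(x)) + (reduced
    cost on S_{m+1}), where g_k(x) is the left-hand side of the constraint of S_k.  For x^pi
    all g_k are tight, which gives the formula for c x^pi.  For any feasible y, summation by
    parts turns c y - c x^pi into sum_k (nu_{pi_k} - nu_{pi_{k-1}}) (g_k(y) - b^{S_k}), a sum
    of nonnegative terms by admissibility and feasibility; so x^pi is optimal. *)

From mathcomp Require Import all_boot all_order all_algebra.
From mathcomp Require Import ring zify.
Set Implicit Arguments. Unset Strict Implicit. Unset Printing Implicit Defensive.
Import Order.TTheory GRing.Theory Num.Theory.
Local Open Scope ring_scope.

Lemma sum_weighted_decrements (R : comPzRingType) (a d : nat -> R) n :
  \sum_(0 <= k < n.+1) a k * (d k - d k.+1) =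
  a 0%N * d 0%N + \sum_(1 <= k < n.+1) (a k - a k.-1) * d k - a n * d n.+1.
Proof.
elim: n => [|n IHn]; first by rewrite big_nat1 big_geq //; ring.
by rewrite big_nat_recr //= IHn [in RHS]big_nat_recr //=; ring.
Qed.

Lemma ler_sum_weighted_decrements (R : realDomainType) (a g h : nat -> R) n :
  (forall k, (k.+1 < n)%N -> a k <= a k.+1) ->
  (forall k, (0 < k < n)%N -> h k <= g k) ->
  h 0%N = g 0%N -> h n = g n ->
  \sum_(0 <= k < n) a k * (h k - h k.+1) <= \sum_(0 <= k < n) a k * (g k - g k.+1).
Proof.
case: n => [|n] a_incr h_le_g h0 hn; first by rewrite !big_geq.
pose d k := g k - h k.
rewrite -subr_ge0 -sumrB (eq_bigr (fun k => a k * (d k - d k.+1))) => [|k _]; last first.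
  by rewrite /d; ring.
rewrite sum_weighted_decrements /d h0 hn !subrr !mulr0 subr0 add0r.
rewrite big_nat_cond; apply: sumr_ge0 => k /andP[/andP[k_gt0 k_le] _]; apply: mulr_ge0.
  by rewrite subr_ge0 -{2}(prednK k_gt0) a_incr // prednK.
by rewrite subr_ge0 h_le_g // k_gt0.
Qed.

Lemma setT_mem_augmentable (J : finType) (F : {set {set J}}) (S0 : {set J}) :
  S0 \in F ->
  (forall S, S \in F -> S != [set: J] -> exists j, j \notin S /\ S :|: [set j] \in F) ->
  [set: J] \in F.
Proof.
move=> S0F augment.
case: (@arg_maxnP _ S0 (mem F) (fun S => #|S|) S0F) => S SF S_max.
apply: contraT => TF; have S_neqT : S != [set: J] by apply: contraNneq TF => <-.
have [j [jS SjF]] := augment S SF S_neqT.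
by have := S_max _ SjF; rewrite setUC cardsU1 jS /=; lia.
Qed.

Section Suffixes.
Variables (J : finType) (pi : nat -> J).

Lemma mem_suffS k x :
  reflect (exists2 i, (k <= i < #|J|)%N & x = pi i) (x \in suffS pi k).
Proof.
rewrite inE; apply: (iffP mapP) => [[i]|[i]].
  by rewrite mem_iota => i_in ->; exists i => //; lia.
by move=> i_in ->; exists i; rewrite ?mem_iota //; lia.
Qed.

Lemma suffS_card : suffS pi #|J| = set0.
Proof. by apply/setP => x; rewrite inE in_set0 subnn. Qed.

Lemma suffS_succ k : (k < #|J|)%N -> suffS pi k = pi k |: suffS pi k.+1.
Proof.
move=> k_lt; apply/setP => x; rewrite in_setU1.
apply/mem_suffS/orP => [[i i_in ->]|[/eqP ->|/mem_suffS [i i_in ->]]].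
- have [k_lt_i|i_le_k] := ltnP k i; first by right; apply/mem_suffS; exists i => //; lia.
  by left; have -> : i = k by lia.
- by exists k => //; lia.
- by exists i => //; lia.
Qed.

Lemma mem_suffS_self k : (k < #|J|)%N -> pi k \in suffS pi k.
Proof. by move=> k_lt; rewrite (suffS_succ k_lt) setU11. Qed.

Lemma suffS_succ_sub k : suffS pi k.+1 \subset suffS pi k.
Proof. by apply/subsetP => x /mem_suffS [i i_in ->]; apply/mem_suffS; exists i => //; lia. Qed.

Hypothesis pi_ord : is_ordering pi.

Lemma suffS0 : suffS pi 0 = [set: J].
Proof. by apply/setP => x; rewrite inE in_setT subn0 (perm_mem pi_ord) mem_enum. Qed.

Lemma ordering_inj i i' : (i < #|J|)%N -> (i' < #|J|)%N -> pi i = pi i' -> i = i'.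
Proof.
move=> i_lt i'_lt pi_eq.
have pi_uniq : uniq [seq pi i | i <- iota 0 #|J|] by rewrite (perm_uniq pi_ord) enum_uniq.
have := nth_uniq (pi 0%N) _ _ pi_uniq; rewrite size_map size_iota => /(_ i i' i_lt i'_lt).
by rewrite !(nth_map 0%N) ?size_iota // !nth_iota // !add0n pi_eq eqxx => /esym/eqP.
Qed.

Lemma pi_notin_suffS i k : (i < #|J|)%N -> (i < k)%N -> pi i \notin suffS pi k.
Proof.
move=> i_lt i_lt_k; apply/mem_suffS => [[i' i'_in pi_eq]].
by have := ordering_inj i_lt (_ : i' < #|J|)%N pi_eq; lia.
Qed.

Lemma suffS_neqT k : (0 < #|J|)%N -> (0 < k)%N -> suffS pi k != [set: J].
Proof.
move=> J_gt0 k_gt0; apply: contraNneq (pi_notin_suffS J_gt0 k_gt0) => ->.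
exact: in_setT.
Qed.

Lemma AG2_run_suffS_mem (R : realFieldType) F (w : {set J} -> J -> R) c k :
  AG2_run F w c pi -> [set: J] \in F -> (k <= #|J|)%N -> suffS pi k \in F.
Proof.
case=> _ run TF; case: k => [|k] k_le; first by rewrite suffS0.
have [/setIdP [_ SkF] _] := run k k_le.
by rewrite (suffS_succ k_le) setU1K ?pi_notin_suffS in SkF.
Qed.

End Suffixes.

Section ReducedCosts.
Variables (R : realFieldType) (J : finType).
Variables (w : {set J} -> J -> R) (c : J -> R) (pi : nat -> J).
Hypothesis pi_ord : is_ordering pi.
Hypothesis w_neq0 : forall k j, j \in suffS pi k -> w (suffS pi k) j != 0.

Definition constraint_lhs (y : J -> R) k := \sum_(j in suffS pi k) w (suffS pi k) j * y j.

Definition reduced_cost (y : J -> R) k := \sum_(j in suffS pi k) cS w c pi k j * y j.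

Lemma constraint_lhs0 y : constraint_lhs y 0 = \sum_j w [set: J] j * y j.
Proof. by rewrite /constraint_lhs suffS0 //; apply: eq_bigl => j; rewrite in_setT. Qed.

Lemma cS_nuS k j : j \in suffS pi k -> cS w c pi k j = w (suffS pi k) j * nuS w c pi k j.
Proof.
elim: k j => [|k IHk] j j_in /=.
  by move: (w_neq0 j_in); rewrite suffS0 // => w_j; field.
have k_lt : (k < #|J|)%N by case/mem_suffS: j_in => i; lia.
have pik_in := mem_suffS_self pi k_lt.
have j_in_k : j \in suffS pi k by apply: subsetP j_in; apply: suffS_succ_sub.
rewrite !IHk //.
by move: (w_neq0 j_in) (w_neq0 pik_in) => w_j w_pik; field; rewrite w_j w_pik.
Qed.

Lemma reduced_cost_succ y k : (k < #|J|)%N ->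
  reduced_cost y k = nuS w c pi k (pi k) * (constraint_lhs y k - constraint_lhs y k.+1)
                     + reduced_cost y k.+1.
Proof.
move=> k_lt; have pik_in := mem_suffS_self pi k_lt.
have sum_split (f : J -> R) :
    \sum_(j in suffS pi k) f j = f (pi k) + \sum_(j in suffS pi k.+1) f j.
  by rewrite (suffS_succ pi k_lt) big_setU1 ?pi_notin_suffS.
have cS_pred j : cS w c pi k j = cS w c pi k.+1 j
    + nuS w c pi k (pi k) * (w (suffS pi k) j - w (suffS pi k.+1) j).
  by rewrite /= (cS_nuS pik_in); move: (w_neq0 pik_in) => w_pik; field.
have tail_split : \sum_(j in suffS pi k.+1) cS w c pi k j * y j =
    \sum_(j in suffS pi k.+1) cS w c pi k.+1 j * y j + nuS w c pi k (pi k) *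
      (\sum_(j in suffS pi k.+1) w (suffS pi k) j * y j
       - \sum_(j in suffS pi k.+1) w (suffS pi k.+1) j * y j).
  by rewrite mulrBr !mulr_sumr -sumrB -big_split; apply: eq_bigr => j _; rewrite cS_pred /=; ring.
by rewrite /reduced_cost /constraint_lhs !sum_split tail_split (cS_nuS pik_in); ring.
Qed.

Lemma cost_telescope y m : (m <= #|J|)%N ->
  \sum_j c j * y j = \sum_(0 <= k < m) nuS w c pi k (pi k)
                       * (constraint_lhs y k - constraint_lhs y k.+1) + reduced_cost y m.
Proof.
elim: m => [_|m IHm m_lt].
  by rewrite big_geq // add0r /reduced_cost suffS0 //; apply: eq_bigl => j; rewrite in_setT.
by rewrite IHm ?(ltnW m_lt) // (reduced_cost_succ _ m_lt) big_nat_recr //= addrA.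
Qed.

End ReducedCosts.

Theorem proposition1 (R : realFieldType) (J : finType) (F : {set {set J}})
  (w : {set J} -> J -> R) (b : {set J} -> R) (c : J -> R)
  (pi : nat -> J) (xpi : J -> R) (m : nat) :
  set0 \in F ->
  (forall S, S \in F -> S != set0 -> boundary F S != set0) ->
  (forall S, S \in F -> S != [set: J] ->
     exists j, j \notin S /\ S :|: [set j] \in F) ->
  (forall S, S \in F -> 0 <= b S) ->
  (forall S j, S \in F -> j \in S -> 0 < w S j) ->
  ext_polymatroid F w b ->
  AG2_run F w c pi ->
  admissible w c pi ->
  solves_string w b pi xpi ->
  (1 <= m <= #|J|.-1)%N ->
  let V := \sum_(0 <= k < m) (nuS w c pi k (pi k))
               * (b (suffS pi k) - b (suffS pi k.+1))
           + \sum_(j in suffS pi m) cS w c pi m j * xpi j in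
  (exists y, inP F w b y /\ \sum_(j : J) c j * y j = V) /\
  (forall y, inP F w b y -> V <= \sum_(j : J) c j * y j).
Proof.
move=> set0F _ augment _ w_gt0 polymatroid run adm xpi_sol m_bound V.
have pi_ord := run.1.
have TF := setT_mem_augmentable set0F augment.
have SF k : (k <= #|J|)%N -> suffS pi k \in F := AG2_run_suffS_mem pi_ord run TF.
have w_neq0 k j : j \in suffS pi k -> w (suffS pi k) j != 0.
  by move=> j_in; rewrite gt_eqF // w_gt0 // SF //; case/mem_suffS: j_in => i; lia.
have xpi_in : inP F w b xpi by apply: polymatroid xpi_sol; split=> // k /ltnW /SF.
have telescope := cost_telescope c pi_ord w_neq0.
have cost_xpi : \sum_j c j * xpi j = V.
  rewrite (telescope _ m); last by lia.
  by congr (_ + _); apply: eq_big_nat => k k_lt; rewrite /constraint_lhs !xpi_sol //; lia.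
split=> [|y [_ y_ge y_eqT]]; first by exists xpi.
rewrite -cost_xpi !(telescope _ #|J|) // /reduced_cost suffS_card !big_set0 !addr0.
apply: ler_sum_weighted_decrements => [k /adm //|k /andP[k_gt0 k_lt]||].
- rewrite /constraint_lhs xpi_sol //; apply: y_ge; first by apply: SF; lia.
  by apply: (suffS_neqT pi_ord); lia.
- by rewrite !constraint_lhs0 //; case: xpi_in => _ _ ->; rewrite y_eqT.
- by rewrite /constraint_lhs suffS_card !big_set0.
Qed.
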